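(* Let $p\in[1,\infty)$, $q\in[1,\infty]$, integers $s_1,s_2,m_1,n\ge1$, $\epsilon\in\{-1,+1\}^n$, points $x_1,\dots,x_n\in\mathbb{R}^{m_1}$ and any function $g:\mathbb{R}^{m_1}\to\mathbb{R}^{s_1}$. Then $$\sup_{0\neq V\in\mathbb{R}^{s_1\times s_2}}\frac{1}{\|V\|_{p,q}}\Big\|\sum_{i=1}^n\epsilon_i\,\sigma\circ\big(V^Tg(x_i)\big)\Big\|_{p^*}=s_2^{[\frac1{p^*}-\frac1q]_+}\sup_{0\ne v\in\mathbb{R}^{s_1}}\frac1{\|v\|_p}\Big|\sum_{i=1}^n\epsilon_i\,\sigma\big(\langle v,g(x_i)\rangle\big)\Big|.$$
   Context: $p^*\in(1,\infty]$ is defined by $1/p+1/p^*=1$; $[x]_+=\max(x,0)$. $\sigma(u)=\max(u,0)$, applied coordinatewise to vectors. For a real $s_1\times s_2$ matrix $A=(a_{ij})$: $\|A\|_{p,q}=\big(\sum_{j=1}^{s_2}(\sum_{i=1}^{s_1}|a_{ij}|^p)^{q/p}\big)^{1/q}$ for $q<\infty$, and $\|A\|_{p,\infty}=\max_j(\sum_{i}|a_{ij}|^p)^{1/p}$. *)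

From Stdlib Require Export Reals List.
Export ListNotations.
Open Scope R_scope.

Definition Rsum (n : nat) (f : nat -> R) : R :=
  fold_right Rplus 0 (map f (seq 0 n)).

(* max_{i<n} f i  (used on nonnegative values; 0 for n = 0) *)
Definition Rmaxn (n : nat) (f : nat -> R) : R :=
  fold_right Rmax 0 (map f (seq 0 n)).

Definition rpow (x y : R) : R :=
  if Rle_dec x 0 then 0 else Rpower x y.

Definition relu (u : R) : R := Rmax u 0.

(* extended exponent in [1, oo]: None = oo *)
Definition extR := option R.

Definition pnorm (p : R) (n : nat) (f : nat -> R) : R :=
  rpow (Rsum n (fun i => rpow (Rabs (f i)) p)) (1 / p).

Definition supnorm (n : nat) (f : nat -> R) : R :=
  Rmaxn n (fun i => Rabs (f i)).

Definition qnorm (q : extR) (n : nat) (f : nat -> R) : R :=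
  match q with
  | Some q' => pnorm q' n f
  | None => supnorm n f
  end.

Definition conj_exp (p : R) : extR :=
  if Req_EM_T p 1 then None else Some (p / (p - 1)).

Definition inv_ext (q : extR) : R :=
  match q with Some q' => 1 / q' | None => 0 end.

(* mixed norm ||A||_{p,q} of an s1 x s2 matrix A (A i j, i < s1, j < s2):
   q-norm over columns j of the p-norm of column j *)
Definition mixed_norm (p : R) (q : extR) (s1 s2 : nat) (A : nat -> nat -> R) : R :=
  qnorm q s2 (fun j => pnorm p s1 (fun i => A i j)).

Definition pos_part (x : R) : R := Rmax x 0.

(* The functional F(v) = sum_i eps_i relu <v, g(x_i)> satisfies |F v| <= K ||v||_p,
   so the right-hand supremum S exists and |F v| <= S ||v||_p.  Applied column by
   column this gives ||(F(V_j))_j||_{p*} <= S ||(||V_j||_p)_j||_{p*}, and the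
   comparison ||a||_{p*} <= s2^[1/p* - 1/q]_+ ||a||_q on R^{s2} (Jensen for the
   power function when p* < q) bounds the left-hand ratios by s2^[..]_+ S.
   Conversely each ratio of a vector v, times s2^[..]_+, is the ratio of a matrix:
   the one whose only nonzero column is v when 1/p* <= 1/q, and the one with s2
   copies of v otherwise. *)

From Stdlib Require Import Reals List Lra Lia FunctionalExtensionality Classical.
Open Scope R_scope.

(** * Real powers *)

Lemma rpow_ge0 x y : 0 <= rpow x y.
Proof.
  unfold rpow; destruct (Rle_dec x 0); [lra|].
  left; apply exp_pos.
Qed.

Lemma rpow_0 y : rpow 0 y = 0.
Proof. unfold rpow; destruct (Rle_dec 0 0); lra. Qed.

Lemma rpow_pos x y : 0 < x -> rpow x y = Rpower x y.
Proof. intros; unfold rpow; destruct (Rle_dec x 0); [lra | reflexivity]. Qed.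

Lemma rpow_base1 a : rpow 1 a = 1.
Proof. rewrite rpow_pos by lra; unfold Rpower; rewrite ln_1, Rmult_0_r; apply exp_0. Qed.

Lemma rpow_1 x : 0 <= x -> rpow x 1 = x.
Proof. intros [hx | <-]; [rewrite rpow_pos; auto; apply Rpower_1; auto | apply rpow_0]. Qed.

Lemma rpow_mul x y a : 0 <= x -> 0 <= y -> rpow (x * y) a = rpow x a * rpow y a.
Proof.
  intros [hx | <-] [hy | <-]; try (rewrite ?Rmult_0_l, ?Rmult_0_r, !rpow_0; ring).
  rewrite !rpow_pos by nra; symmetry; apply Rpower_mult_distr; auto.
Qed.

Lemma rpow_plus x a b : 0 <= x -> rpow x (a + b) = rpow x a * rpow x b.
Proof.
  intros [hx | <-]; [rewrite !rpow_pos; auto; apply Rpower_plus | rewrite !rpow_0; ring].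
Qed.

Lemma rpow_rpow x a b : 0 <= x -> rpow (rpow x a) b = rpow x (a * b).
Proof.
  intros [hx | <-]; [| rewrite !rpow_0; reflexivity].
  rewrite !(rpow_pos x) by auto.
  rewrite rpow_pos by apply exp_pos; apply Rpower_mult.
Qed.

Lemma rpow_rpow_inv x r : 0 <= x -> 0 < r -> rpow (rpow x r) (1 / r) = x.
Proof.
  intros; rewrite rpow_rpow by auto.
  replace (r * (1 / r)) with 1 by (field; lra); apply rpow_1; auto.
Qed.

Lemma rpow_le x y a : 0 <= x <= y -> 0 <= a -> rpow x a <= rpow y a.
Proof.
  intros [[hx | <-] hxy] ha; [| rewrite rpow_0; apply rpow_ge0].
  rewrite !rpow_pos by lra; apply Rle_Rpower_l; lra.
Qed.

Lemma Rdiv_nonneg a b : 0 <= a -> 0 < b -> 0 <= a / b.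
Proof. intros; unfold Rdiv; apply Rmult_le_pos; [| left; apply Rinv_0_lt_compat]; auto. Qed.

Lemma Rdiv_le_iff a b c : 0 < b -> (a / b <= c <-> a <= c * b).
Proof.
  intros hb; split; intros H.
  - apply (Rmult_le_compat_r b) in H; [| lra].
    unfold Rdiv in H; rewrite Rmult_assoc, Rinv_l, Rmult_1_r in H; lra.
  - apply (Rmult_le_reg_r b); auto.
    unfold Rdiv; rewrite Rmult_assoc, Rinv_l, Rmult_1_r; lra.
Qed.

Lemma rpow_bernoulli y t : 0 <= y -> 1 <= t -> 1 + t * (y - 1) <= rpow y t.
Proof.
  intros [hy | <-] ht; [| rewrite rpow_0; nra].
  rewrite rpow_pos by auto.
  set (h := fun z => Rpower z t - t * z).
  assert (Dh : forall c, 0 < c -> derivable_pt_lim h c (t * (Rpower c (t - 1) - 1))).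
  { intros c hc; replace (t * (Rpower c (t - 1) - 1)) with (t * Rpower c (t - 1) - t * 1)
      by ring.
    apply (derivable_pt_lim_minus (fun z => Rpower z t) (mult_real_fct t id)).
    - apply derivable_pt_lim_power; auto.
    - apply derivable_pt_lim_scal, derivable_pt_lim_id. }
  assert (h1 : h 1 = 1 - t) by (unfold h; rewrite <- rpow_pos, rpow_base1 by lra; ring).
  enough (h 1 <= h y) by (unfold h in *; lra).
  set (h' := fun c => t * (Rpower c (t - 1) - 1)).
  assert (Hbase : Rpower 1 (t - 1) = 1) by (rewrite <- (rpow_pos 1), rpow_base1 by lra; auto).
  destruct (Rtotal_order y 1) as [hlt | [-> | hgt]].
  - destruct (MVT_cor2 h h' y 1 hlt) as [c [Hc Hcy]]; [intros c hc; apply Dh; lra |].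
    assert (Hpow : Rpower c (t - 1) <= Rpower 1 (t - 1)) by (apply Rle_Rpower_l; lra).
    assert (0 <= t * (1 - Rpower c (t - 1)) * (1 - y)) by (apply Rmult_le_pos; nra).
    unfold h' in Hc; nra.
  - lra.
  - destruct (MVT_cor2 h h' 1 y hgt) as [c [Hc Hcy]]; [intros c hc; apply Dh; lra |].
    assert (Hpow : Rpower 1 (t - 1) <= Rpower c (t - 1)) by (apply Rle_Rpower_l; lra).
    assert (0 <= t * (Rpower c (t - 1) - 1) * (y - 1)) by (apply Rmult_le_pos; nra).
    unfold h' in Hc; nra.
Qed.

(** * Finite sums and maxima *)

Lemma Rsum_0 f : Rsum 0 f = 0.
Proof. reflexivity. Qed.

Lemma Rsum_S n f : Rsum (S n) f = Rsum n f + f n.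
Proof.
  unfold Rsum; rewrite seq_S, map_app, fold_right_app; simpl.
  induction (map f (seq 0 n)) as [| a l IH]; simpl; [ring | rewrite IH; ring].
Qed.

Lemma Rsum_ext n f g : (forall i, (i < n)%nat -> f i = g i) -> Rsum n f = Rsum n g.
Proof.
  induction n; intros H; [reflexivity |].
  rewrite !Rsum_S, IHn, H by auto; reflexivity.
Qed.

Lemma Rsum_le n f g : (forall i, (i < n)%nat -> f i <= g i) -> Rsum n f <= Rsum n g.
Proof.
  induction n; intros H; [apply Rle_refl |].
  rewrite !Rsum_S; apply Rplus_le_compat; auto.
Qed.

Lemma Rsum_nonneg n f : (forall i, (i < n)%nat -> 0 <= f i) -> 0 <= Rsum n f.
Proof.
  induction n; intros H; [apply Rle_refl |].
  rewrite Rsum_S; apply Rplus_le_le_0_compat; auto.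
Qed.

Lemma Rsum_term n f i :
  (forall j, (j < n)%nat -> 0 <= f j) -> (i < n)%nat -> f i <= Rsum n f.
Proof.
  induction n; intros H hi; [lia |].
  rewrite Rsum_S; destruct (Nat.eq_dec i n) as [-> | hne].
  - assert (0 <= Rsum n f) by (apply Rsum_nonneg; auto); lra.
  - assert (f i <= Rsum n f) by (apply IHn; auto; lia).
    assert (0 <= f n) by auto; lra.
Qed.

Lemma Rsum_affine n a c f : Rsum n (fun i => a + c * f i) = a * INR n + c * Rsum n f.
Proof.
  induction n; [rewrite !Rsum_0; simpl; ring |].
  rewrite !Rsum_S, IHn, S_INR; ring.
Qed.

Lemma Rsum_const n c : Rsum n (fun _ => c) = INR n * c.
Proof.
  rewrite (Rsum_ext n _ (fun _ => c + 0 * 0)) by (intros; ring).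
  rewrite Rsum_affine; ring.
Qed.

Lemma Rsum_scal n c f : Rsum n (fun i => c * f i) = c * Rsum n f.
Proof.
  rewrite (Rsum_ext n _ (fun i => 0 + c * f i)) by (intros; ring).
  rewrite Rsum_affine; ring.
Qed.

Lemma Rsum_abs n f : Rabs (Rsum n f) <= Rsum n (fun i => Rabs (f i)).
Proof.
  induction n; [rewrite !Rsum_0, Rabs_R0; lra |].
  rewrite !Rsum_S; eapply Rle_trans; [apply Rabs_triang | lra].
Qed.

Lemma Rmaxn_S n f : Rmaxn (S n) f = Rmax (Rmaxn n f) (f n).
Proof.
  unfold Rmaxn; rewrite seq_S, map_app, fold_right_app; simpl.
  induction (map f (seq 0 n)) as [| a l IH]; simpl; [apply Rmax_comm |].
  rewrite IH; apply Rmax_assoc.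
Qed.

Lemma Rmaxn_ge0 n f : 0 <= Rmaxn n f.
Proof.
  induction n; [apply Rle_refl |].
  rewrite Rmaxn_S; eapply Rle_trans; [apply IHn | apply Rmax_l].
Qed.

Lemma Rmaxn_term n f i : (i < n)%nat -> f i <= Rmaxn n f.
Proof.
  induction n; intros hi; [lia |].
  rewrite Rmaxn_S; destruct (Nat.eq_dec i n) as [-> | hne]; [apply Rmax_r |].
  eapply Rle_trans; [apply IHn; lia | apply Rmax_l].
Qed.

Lemma Rmaxn_lub n f B : 0 <= B -> (forall i, (i < n)%nat -> f i <= B) -> Rmaxn n f <= B.
Proof.
  induction n; intros hB H; [exact hB |].
  rewrite Rmaxn_S; apply Rmax_lub; auto.
Qed.

Lemma Rmaxn_scal n c f : 0 <= c -> Rmaxn n (fun i => c * f i) = c * Rmaxn n f.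
Proof.
  intros hc; induction n; [unfold Rmaxn; simpl; ring |].
  rewrite !Rmaxn_S, IHn; apply RmaxRmult; auto.
Qed.

(* Jensen's inequality for [b |-> b^t]: sum Bernoulli's inequality for [b i / mean]. *)
Lemma power_mean_le n b t : (1 <= n)%nat -> (forall i, (i < n)%nat -> 0 <= b i) -> 1 <= t ->
  INR n * rpow (Rsum n b / INR n) t <= Rsum n (fun i => rpow (b i) t).
Proof.
  intros hn hb ht; assert (hN : 0 < INR n) by (apply lt_0_INR; lia).
  set (m := Rsum n b / INR n).
  assert (hm : 0 <= m) by (apply Rdiv_nonneg; auto; apply Rsum_nonneg; auto).
  destruct hm as [hm | hm0].
  2:{ rewrite <- hm0, rpow_0, Rmult_0_r; apply Rsum_nonneg; intros; apply rpow_ge0. }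
  assert (Hb : Rsum n b = m * INR n) by (unfold m; field; lra).
  assert (hinv : 0 < / m) by (apply Rinv_0_lt_compat; auto).
  assert (Hsum : INR n <= rpow (/ m) t * Rsum n (fun i => rpow (b i) t)).
  { replace (INR n) with (Rsum n (fun i => (1 - t) + t / m * b i))
      by (rewrite Rsum_affine, Hb; field; lra).
    rewrite <- Rsum_scal; apply Rsum_le; intros i hi.
    rewrite <- rpow_mul by (auto; lra).
    eapply Rle_trans; [| apply rpow_bernoulli; [apply Rmult_le_pos; auto; lra | auto]].
    right; field; lra. }
  apply (Rmult_le_compat_l (rpow m t)) in Hsum; [| apply rpow_ge0].
  rewrite <- Rmult_assoc, <- rpow_mul, Rinv_r, rpow_base1 in Hsum by lra; lra.
Qed.

(** * Norms on R^n *)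

Definition nonzero_on (n : nat) (a : nat -> R) : Prop := exists i, (i < n)%nat /\ a i <> 0.

Section PNorm.
Variable r : R.
Hypothesis r_pos : 0 < r.

Lemma pnorm_ge0 n a : 0 <= pnorm r n a.
Proof. apply rpow_ge0. Qed.

Lemma rpow_pnorm n a : rpow (pnorm r n a) r = Rsum n (fun i => rpow (Rabs (a i)) r).
Proof.
  unfold pnorm; rewrite rpow_rpow by (apply Rsum_nonneg; intros; apply rpow_ge0).
  replace (1 / r * r) with 1 by (field; lra).
  apply rpow_1, Rsum_nonneg; intros; apply rpow_ge0.
Qed.

Lemma pnorm_term n a i : (i < n)%nat -> Rabs (a i) <= pnorm r n a.
Proof.
  intros hi; unfold pnorm.
  rewrite <- (rpow_rpow_inv (Rabs (a i)) r) by (auto; apply Rabs_pos).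
  apply rpow_le; [split; [apply rpow_ge0 |] | apply Rdiv_nonneg; auto; lra].
  apply (Rsum_term n (fun i => rpow (Rabs (a i)) r)); auto; intros; apply rpow_ge0.
Qed.

Lemma pnorm_pos n a : nonzero_on n a -> 0 < pnorm r n a.
Proof.
  intros [i [hi ha]]; eapply Rlt_le_trans; [apply Rabs_pos_lt, ha | apply pnorm_term, hi].
Qed.

Lemma pnorm_mono n a b :
  (forall i, (i < n)%nat -> Rabs (a i) <= Rabs (b i)) -> pnorm r n a <= pnorm r n b.
Proof.
  intros H; unfold pnorm; apply rpow_le; [split | apply Rdiv_nonneg; auto; lra].
  - apply Rsum_nonneg; intros; apply rpow_ge0.
  - apply Rsum_le; intros i hi; apply rpow_le; [split; [apply Rabs_pos | auto] | lra].
Qed.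

Lemma pnorm_scal n c a : pnorm r n (fun i => c * a i) = Rabs c * pnorm r n a.
Proof.
  unfold pnorm.
  rewrite (Rsum_ext n _ (fun i => rpow (Rabs c) r * rpow (Rabs (a i)) r))
    by (intros; rewrite Rabs_mult, rpow_mul; auto; apply Rabs_pos).
  rewrite Rsum_scal, rpow_mul, rpow_rpow_inv; auto.
  - apply Rabs_pos.
  - apply rpow_ge0.
  - apply Rsum_nonneg; intros; apply rpow_ge0.
Qed.

Lemma pnorm_const n c : (1 <= n)%nat -> pnorm r n (fun _ => c) = Rpower (INR n) (1 / r) * Rabs c.
Proof.
  intros hn; assert (0 < INR n) by (apply lt_0_INR; lia).
  unfold pnorm; rewrite Rsum_const, rpow_mul, rpow_rpow_inv, rpow_pos; auto.
  - apply Rabs_pos.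
  - lra.
  - apply rpow_ge0.
Qed.

Lemma pnorm_zero n : pnorm r n (fun _ => 0) = 0.
Proof. unfold pnorm; rewrite Rsum_const, Rabs_R0, rpow_0, Rmult_0_r; apply rpow_0. Qed.

Lemma pnorm_first n c : (1 <= n)%nat ->
  pnorm r n (fun j => if Nat.eqb j 0 then c else 0) = Rabs c.
Proof.
  intros hn; unfold pnorm; rewrite <- (rpow_rpow_inv (Rabs c) r) by (auto; apply Rabs_pos).
  f_equal; induction n as [| n IH]; [lia |].
  rewrite Rsum_S; destruct n as [| n]; [rewrite Rsum_0; simpl; ring |].
  rewrite IH by lia; simpl; rewrite Rabs_R0, rpow_0; ring.
Qed.

End PNorm.

Lemma pnorm_antimono r q n a : 0 < q <= r -> pnorm r n a <= pnorm q n a.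
Proof.
  intros hq; set (N := pnorm q n a).
  assert (HN : 0 <= N) by apply pnorm_ge0.
  unfold pnorm at 1; rewrite <- (rpow_rpow_inv N r) by lra.
  apply rpow_le; [split | apply Rdiv_nonneg; lra].
  - apply Rsum_nonneg; intros; apply rpow_ge0.
  - replace (rpow N r) with (rpow N (r - q) * rpow N q)
      by (rewrite <- rpow_plus by auto; f_equal; ring).
    unfold N at 2; rewrite rpow_pnorm, <- Rsum_scal by lra.
    apply Rsum_le; intros i hi.
    replace (rpow (Rabs (a i)) r) with (rpow (Rabs (a i)) (r - q) * rpow (Rabs (a i)) q)
      by (rewrite <- rpow_plus by apply Rabs_pos; f_equal; ring).
    apply Rmult_le_compat_r; [apply rpow_ge0 |].
    apply rpow_le; [split; [apply Rabs_pos | apply pnorm_term; [lra | auto]] | lra].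
Qed.

Lemma pnorm_le_scaled r q n a : (1 <= n)%nat -> 0 < r < q ->
  pnorm r n a <= Rpower (INR n) (1 / r - 1 / q) * pnorm q n a.
Proof.
  intros hn hrq; assert (hN : 0 < INR n) by (apply lt_0_INR; lia).
  set (A := Rsum n (fun i => rpow (Rabs (a i)) r)).
  assert (hA : 0 <= A) by (apply Rsum_nonneg; intros; apply rpow_ge0).
  assert (hmean : 0 <= A / INR n) by (apply Rdiv_nonneg; auto).
  assert (Hjensen : INR n * rpow (A / INR n) (q / r) <= rpow (pnorm q n a) q).
  { rewrite rpow_pnorm by lra.
    rewrite (Rsum_ext n _ (fun i => rpow (rpow (Rabs (a i)) r) (q / r))).
    - apply power_mean_le; auto; [intros; apply rpow_ge0 |].
      apply (Rmult_le_reg_r r); [lra | field_simplify; lra].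
    - intros; rewrite rpow_rpow by apply Rabs_pos; f_equal; field; lra. }
  assert (Hroot : rpow (INR n * rpow (A / INR n) (q / r)) (1 / q) <= pnorm q n a).
  { rewrite <- (rpow_rpow_inv (pnorm q n a) q) by (try apply pnorm_ge0; lra).
    apply rpow_le; [| apply Rdiv_nonneg; lra].
    split; [apply Rmult_le_pos; [lra | apply rpow_ge0] | exact Hjensen]. }
  rewrite rpow_mul, rpow_rpow in Hroot by (auto; lra || apply rpow_ge0).
  replace (q / r * (1 / q)) with (1 / r) in Hroot by (field; lra).
  unfold pnorm at 1; fold A.
  replace A with (INR n * (A / INR n)) by (field; lra).
  rewrite <- rpow_pos, rpow_mul by (auto; lra).
  replace (rpow (INR n) (1 / r)) with (rpow (INR n) (1 / r - 1 / q) * rpow (INR n) (1 / q))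
    by (rewrite <- rpow_plus by lra; f_equal; ring).
  rewrite Rmult_assoc; apply Rmult_le_compat_l; [apply rpow_ge0 | exact Hroot].
Qed.

Lemma supnorm_term n a i : (i < n)%nat -> Rabs (a i) <= supnorm n a.
Proof. apply (Rmaxn_term n (fun i => Rabs (a i))). Qed.

Lemma supnorm_lub n a B : 0 <= B -> (forall i, (i < n)%nat -> Rabs (a i) <= B) -> supnorm n a <= B.
Proof. apply Rmaxn_lub. Qed.

Lemma supnorm_ge0 n a : 0 <= supnorm n a.
Proof. apply Rmaxn_ge0. Qed.

Lemma supnorm_scal n c a : supnorm n (fun i => c * a i) = Rabs c * supnorm n a.
Proof.
  unfold supnorm; rewrite <- Rmaxn_scal by apply Rabs_pos.
  f_equal; extensionality i; apply Rabs_mult.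
Qed.

Lemma supnorm_le_pnorm r n a : 0 < r -> supnorm n a <= pnorm r n a.
Proof. intros; apply supnorm_lub; [apply pnorm_ge0 | intros; apply pnorm_term; auto]. Qed.

Lemma pnorm_le_supnorm r n a : 0 < r -> (1 <= n)%nat ->
  pnorm r n a <= Rpower (INR n) (1 / r) * supnorm n a.
Proof.
  intros hr hn.
  rewrite <- (Rabs_pos_eq (supnorm n a)) by apply supnorm_ge0.
  rewrite <- pnorm_const by auto.
  apply pnorm_mono; auto; intros i hi.
  rewrite (Rabs_pos_eq (supnorm n a)) by apply supnorm_ge0; apply supnorm_term; auto.
Qed.

Definition extpos (q : extR) : Prop := match q with Some q' => 0 < q' | None => True end.

Lemma extpos_ge1 (q : extR) : match q with Some q' => 1 <= q' | None => True end -> extpos q.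
Proof. destruct q; simpl; lra. Qed.

Lemma extpos_conj_exp p : 1 <= p -> extpos (conj_exp p).
Proof.
  intros hp; unfold conj_exp; destruct (Req_EM_T p 1); simpl; auto.
  apply Rdiv_lt_0_compat; lra.
Qed.

Section QNorm.
Variable q : extR.
Hypothesis q_pos : extpos q.

Lemma qnorm_term n a i : (i < n)%nat -> Rabs (a i) <= qnorm q n a.
Proof. destruct q; simpl; [apply pnorm_term; auto | apply supnorm_term]. Qed.

Lemma qnorm_pos n a : nonzero_on n a -> 0 < qnorm q n a.
Proof.
  intros [i [hi ha]]; eapply Rlt_le_trans; [apply Rabs_pos_lt, ha | apply qnorm_term, hi].
Qed.

Lemma qnorm_mono n a b :
  (forall i, (i < n)%nat -> Rabs (a i) <= Rabs (b i)) -> qnorm q n a <= qnorm q n b.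
Proof.
  destruct q; simpl; intros H; [apply pnorm_mono; auto |].
  apply supnorm_lub; [apply supnorm_ge0 |].
  intros; eapply Rle_trans; [apply H; auto | apply supnorm_term; auto].
Qed.

Lemma qnorm_scal n c a : qnorm q n (fun i => c * a i) = Rabs c * qnorm q n a.
Proof. destruct q; simpl; [apply pnorm_scal; auto | apply supnorm_scal]. Qed.

Lemma qnorm_const n c : (1 <= n)%nat ->
  qnorm q n (fun _ => c) = Rpower (INR n) (inv_ext q) * Rabs c.
Proof.
  intros hn; destruct q; simpl; [apply pnorm_const; auto |].
  rewrite Rpower_O by (apply lt_0_INR; lia); rewrite Rmult_1_l.
  apply Rle_antisym; [apply supnorm_lub; [apply Rabs_pos | intros; lra] |].
  apply (supnorm_term n (fun _ => c) 0); lia.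
Qed.

Lemma qnorm_first n c : (1 <= n)%nat ->
  qnorm q n (fun j => if Nat.eqb j 0 then c else 0) = Rabs c.
Proof.
  intros hn; destruct q; simpl; [apply pnorm_first; auto |].
  apply Rle_antisym.
  - apply supnorm_lub; [apply Rabs_pos |].
    intros [| i] _; simpl; [lra | rewrite Rabs_R0; apply Rabs_pos].
  - apply (supnorm_term n (fun j => if Nat.eqb j 0 then c else 0) 0); lia.
Qed.

End QNorm.

Lemma qnorm_le_scaled r q n a : extpos r -> extpos q -> (1 <= n)%nat ->
  qnorm r n a <= Rpower (INR n) (pos_part (inv_ext r - inv_ext q)) * qnorm q n a.
Proof.
  intros hr hq hn; assert (hN : 0 < INR n) by (apply lt_0_INR; lia).
  assert (Hflat : forall x, x <= 0 -> Rpower (INR n) (pos_part x) = 1)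
    by (intros; unfold pos_part; rewrite Rmax_right by auto; apply Rpower_O; auto).
  assert (Hsteep : forall x, 0 <= x -> pos_part x = x)
    by (intros; unfold pos_part; apply Rmax_left; auto).
  destruct r as [r |], q as [q |]; simpl in *.
  - destruct (Rle_lt_dec q r) as [hqr | hrq].
    + rewrite Hflat, Rmult_1_l by (assert (/ r <= / q) by (apply Rinv_le_contravar; lra);
        unfold Rdiv; lra).
      apply pnorm_antimono; lra.
    + rewrite Hsteep by (assert (/ q < / r) by (apply Rinv_lt_contravar; nra);
        unfold Rdiv; lra).
      apply pnorm_le_scaled; auto; lra.
  - rewrite Rminus_0_r, Hsteep by (apply Rdiv_nonneg; auto; lra).
    apply pnorm_le_supnorm; auto.
  - rewrite Hflat, Rmult_1_l by (assert (0 <= 1 / q) by (apply Rdiv_nonneg; auto; lra); lra).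
    apply supnorm_le_pnorm; auto.
  - rewrite Hflat by lra; lra.
Qed.

Lemma is_lub_scale (E1 E2 : R -> Prop) c C : 0 < c -> is_lub E1 C ->
  (forall r, E2 r -> r <= c * C) -> (forall r, E1 r -> E2 (c * r)) -> is_lub E2 (c * C).
Proof.
  intros hc [_ HC] Hup Hattain; split; [exact Hup |].
  intros b Hb.
  assert (HCb : C <= b / c).
  { apply HC; intros r Hr; apply (Rmult_le_reg_l c); auto.
    replace (c * (b / c)) with b by (field; lra); apply Hb, Hattain, Hr. }
  apply (Rmult_le_compat_l c) in HCb; [| lra].
  replace (c * (b / c)) with b in HCb by (field; lra); exact HCb.
Qed.

(** * The one-hidden-layer ReLU functional *)

Lemma relu_abs y : Rabs (relu y) <= Rabs y.
Proof.
  unfold relu, Rmax; destruct (Rle_dec y 0); [rewrite Rabs_R0; apply Rabs_pos | lra].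
Qed.

Section Network.
Variables (p : R) (s1 n : nat) (eps : nat -> R) (G : nat -> nat -> R).
Hypotheses (p_pos : 0 < p) (s1_pos : (1 <= s1)%nat).

Definition net (v : nat -> R) : R :=
  Rsum n (fun i => eps i * relu (Rsum s1 (fun k => v k * G i k))).

Definition vec_ratios (r : R) : Prop :=
  exists v, nonzero_on s1 v /\ r = Rabs (net v) / pnorm p s1 v.

Definition mat_ratios (q : extR) (s2 : nat) (r : R) : Prop :=
  exists V : nat -> nat -> R,
    (exists k j, (k < s1)%nat /\ (j < s2)%nat /\ V k j <> 0) /\
    r = qnorm (conj_exp p) s2 (fun j => net (fun k => V k j)) / mixed_norm p q s1 s2 V.

Lemma net_vanish v : ~ nonzero_on s1 v -> net v = 0.
Proof.
  intros hv; unfold net; rewrite (Rsum_ext n _ (fun _ => 0)), Rsum_const; [ring |].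
  intros i _; rewrite (Rsum_ext s1 _ (fun _ => 0)), Rsum_const.
  - unfold relu; rewrite Rmult_0_r, Rmax_left; lra.
  - intros k hk; destruct (Req_dec (v k) 0) as [-> | hvk]; [ring |].
    exfalso; apply hv; exists k; auto.
Qed.

Lemma net_bounded : exists K, forall v, Rabs (net v) <= K * pnorm p s1 v.
Proof.
  exists (Rsum n (fun i => Rabs (eps i) * Rsum s1 (fun k => Rabs (G i k)))); intros v.
  rewrite Rmult_comm, <- Rsum_scal; eapply Rle_trans; [apply Rsum_abs |].
  apply Rsum_le; intros i _; rewrite Rabs_mult.
  replace (pnorm p s1 v * (Rabs (eps i) * Rsum s1 (fun k => Rabs (G i k))))
    with (Rabs (eps i) * Rsum s1 (fun k => pnorm p s1 v * Rabs (G i k)))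
    by (rewrite Rsum_scal; ring).
  apply Rmult_le_compat_l; [apply Rabs_pos |].
  eapply Rle_trans; [apply relu_abs |]; eapply Rle_trans; [apply Rsum_abs |].
  apply Rsum_le; intros k hk; rewrite Rabs_mult.
  apply Rmult_le_compat_r; [apply Rabs_pos | apply pnorm_term; auto].
Qed.

Lemma vec_ratios_nonneg r : vec_ratios r -> 0 <= r.
Proof.
  intros [v [hv ->]]; apply Rdiv_nonneg; [apply Rabs_pos | apply pnorm_pos; auto].
Qed.

Lemma vec_ratios_inhabited : exists r, vec_ratios r.
Proof.
  exists (Rabs (net (fun _ => 1)) / pnorm p s1 (fun _ => 1)), (fun _ => 1).
  split; auto; exists 0%nat; split; [lia | lra].
Qed.

Lemma vec_ratios_has_lub : exists C, is_lub vec_ratios C.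
Proof.
  destruct net_bounded as [K HK].
  assert (Hbound : bound vec_ratios).
  { exists K; intros r [v [hv ->]].
    apply Rdiv_le_iff; [apply pnorm_pos; auto | apply HK]. }
  destruct (completeness vec_ratios Hbound vec_ratios_inhabited) as [C HC].
  exists C; exact HC.
Qed.

Variables (q : extR) (s2 : nat).
Hypotheses (p_ge1 : 1 <= p) (q_pos : extpos q) (s2_pos : (1 <= s2)%nat).

Lemma mat_ratios_single_column v : nonzero_on s1 v ->
  mat_ratios q s2 (Rabs (net v) / pnorm p s1 v).
Proof.
  intros hv; exists (fun k j => if Nat.eqb j 0 then v k else 0); cbv beta; split.
  { destruct hv as [k [hk hvk]]; exists k, 0%nat; simpl; auto. }
  assert (Hnet : (fun j => net (fun k => if Nat.eqb j 0 then v k else 0))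
                 = (fun j => if Nat.eqb j 0 then net v else 0)).
  { extensionality j; destruct j as [| j]; simpl; [reflexivity |].
    apply net_vanish; intros [k [_ hk]]; apply hk; reflexivity. }
  assert (Hcols : (fun j => pnorm p s1 (fun k => if Nat.eqb j 0 then v k else 0))
                  = (fun j => if Nat.eqb j 0 then pnorm p s1 v else 0)).
  { extensionality j; destruct j as [| j]; simpl; [reflexivity | apply pnorm_zero; auto]. }
  unfold mixed_norm; rewrite Hnet, Hcols, !qnorm_first by (auto; apply extpos_conj_exp; auto).
  rewrite (Rabs_pos_eq (pnorm p s1 v)) by apply pnorm_ge0; reflexivity.
Qed.

Lemma mat_ratios_constant_columns v : nonzero_on s1 v ->
  mat_ratios q s2 (Rpower (INR s2) (inv_ext (conj_exp p) - inv_ext q) *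
                   (Rabs (net v) / pnorm p s1 v)).
Proof.
  intros hv; exists (fun k _ => v k); cbv beta; split.
  { destruct hv as [k [hk hvk]]; exists k, 0%nat; repeat split; auto; lia. }
  assert (hP : 0 < pnorm p s1 v) by (apply pnorm_pos; auto).
  assert (0 < Rpower (INR s2) (inv_ext q)) by apply exp_pos.
  unfold mixed_norm; change (fun k => v k) with v.
  rewrite !qnorm_const by (auto; apply extpos_conj_exp; auto).
  rewrite (Rabs_pos_eq (pnorm p s1 v)) by lra.
  unfold Rminus; rewrite Rpower_plus, Rpower_Ropp; field; lra.
Qed.

Lemma mat_ratios_attain r : vec_ratios r ->
  mat_ratios q s2 (Rpower (INR s2) (pos_part (inv_ext (conj_exp p) - inv_ext q)) * r).
Proof.
  intros [v [hv ->]]; unfold pos_part.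
  destruct (Rle_dec (inv_ext (conj_exp p) - inv_ext q) 0) as [hle | hgt].
  - rewrite Rmax_right, Rpower_O, Rmult_1_l by (auto; apply lt_0_INR; lia).
    apply mat_ratios_single_column; auto.
  - rewrite Rmax_left by lra; apply mat_ratios_constant_columns; auto.
Qed.

Section BestConstant.
Variable C : R.
Hypothesis C_lub : is_lub vec_ratios C.

Lemma lub_vec_ratios_nonneg : 0 <= C.
Proof.
  destruct vec_ratios_inhabited as [r Hr].
  apply Rle_trans with r; [apply vec_ratios_nonneg, Hr | apply C_lub, Hr].
Qed.

Lemma net_le_lub v : Rabs (net v) <= C * pnorm p s1 v.
Proof.
  destruct (classic (nonzero_on s1 v)) as [hv | hv].
  - apply Rdiv_le_iff; [apply pnorm_pos; auto |].
    apply C_lub; exists v; auto.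
  - rewrite net_vanish, Rabs_R0 by auto.
    apply Rmult_le_pos; [apply lub_vec_ratios_nonneg | apply pnorm_ge0].
Qed.

Lemma mat_ratios_le r : mat_ratios q s2 r ->
  r <= Rpower (INR s2) (pos_part (inv_ext (conj_exp p) - inv_ext q)) * C.
Proof.
  intros [V [[k [j [hk [hj hV]]]] ->]].
  set (colnorm := fun j => pnorm p s1 (fun k => V k j)).
  change (mixed_norm p q s1 s2 V) with (qnorm q s2 colnorm).
  assert (hr := extpos_conj_exp p p_ge1).
  assert (hC := lub_vec_ratios_nonneg).
  apply Rdiv_le_iff.
  { apply qnorm_pos; auto; exists j; split; auto.
    apply Rgt_not_eq, pnorm_pos; auto; exists k; auto. }
  apply Rle_trans with (qnorm (conj_exp p) s2 (fun j => C * colnorm j)).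
  - apply qnorm_mono; auto; intros j' _.
    rewrite Rabs_mult, (Rabs_pos_eq C), (Rabs_pos_eq (colnorm j')) by (auto; apply pnorm_ge0).
    apply net_le_lub.
  - rewrite qnorm_scal, Rabs_pos_eq by auto.
    rewrite (Rmult_comm (Rpower _ _) C), Rmult_assoc.
    apply Rmult_le_compat_l; auto; apply qnorm_le_scaled; auto.
Qed.

End BestConstant.
End Network.

Theorem mainTheorem7
  (p : R) (q : extR) (s1 s2 m1 n : nat)
  (eps : nat -> R) (x : nat -> list R) (g : list R -> nat -> R)
  (Hp : 1 <= p)
  (Hq : match q with Some q' => 1 <= q' | None => True end)
  (Hs1 : (1 <= s1)%nat) (Hs2 : (1 <= s2)%nat) (Hm1 : (1 <= m1)%nat) (Hn : (1 <= n)%nat)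
  (Heps : forall i, (i < n)%nat -> eps i = 1 \/ eps i = -1)
  (Hx : forall i, (i < n)%nat -> length (x i) = m1) :
  exists S : R,
    is_lub (fun r => exists v : nat -> R,
              (exists k, (k < s1)%nat /\ v k <> 0) /\
              r = Rabs (Rsum n (fun i => eps i *
                        relu (Rsum s1 (fun k => v k * g (x i) k))))
                  / pnorm p s1 v) S /\
    is_lub (fun r => exists V : nat -> nat -> R,
              (exists k j, (k < s1)%nat /\ (j < s2)%nat /\ V k j <> 0) /\
              r = qnorm (conj_exp p) s2
                    (fun j => Rsum n (fun i => eps i *
                        relu (Rsum s1 (fun k => V k j * g (x i) k))))
                  / mixed_norm p q s1 s2 V)
      (Rpower (INR s2) (pos_part (inv_ext (conj_exp p) - inv_ext q)) * S).
Proof.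
  set (G := fun i k => g (x i) k).
  assert (hp : 0 < p) by lra.
  assert (hq := extpos_ge1 q Hq).
  destruct (vec_ratios_has_lub p s1 n eps G hp Hs1) as [C HC].
  exists C; split; [exact HC |].
  apply (is_lub_scale (vec_ratios p s1 n eps G)); [apply exp_pos | exact HC | |].
  - apply mat_ratios_le; auto.
  - apply mat_ratios_attain; auto.
Qed.
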